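(* For all complex $x,y$, $$\sum_{n=0}^{\infty}R_n(y)\frac{x^n}{n!}=e^{y}\int_0^{y}e^{-t}I_0(2\sqrt{xt})\,dt=e^{y}\sum_{n=0}^{\infty}(-1)^nL_n(x)\frac{y^{n+1}}{(n+1)!}.$$
   Context: For an integer $n\ge 0$ and complex $y$, $R_n(y)=e^y-1-\frac{y}{1!}-\frac{y^2}{2!}-\dots-\frac{y^n}{n!}=e^y-\sum_{k=0}^n\frac{y^k}{k!}$. $I_0(2\sqrt{z})=\sum_{n\ge0}\frac{z^n}{(n!)^2}$ (an entire function of $z$). $L_n(x)=\sum_{k=0}^{n}\binom{n}{k}\frac{(-1)^kx^k}{k!}$ are the Laguerre polynomials. The integral is along the segment from $0$ to $y$. *)

From Stdlib Require Import Reals.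
From Coquelicot Require Import Coquelicot.
Open Scope C_scope.

Definition cexp (z : C) : C :=
  (exp (Re z) * cos (Im z), exp (Re z) * sin (Im z))%R.

Definition cfact (n : nat) : C := RtoC (INR (Factorial.fact n)).

Definition Rrem (n : nat) (y : C) : C :=
  cexp y - sum_n (fun k => y ^ k / cfact k) n.

Definition CSeries (a : nat -> C) : C :=
  (Series (fun n => Re (a n)), Series (fun n => Im (a n))).

(* The entire function z |-> I_0(2 sqrt z) = sum_{n>=0} z^n / (n!)^2. *)
Definition I0sqrt (z : C) : C :=
  CSeries (fun n => z ^ n / (cfact n * cfact n)).

Definition Laguerre (n : nat) (x : C) : C :=
  sum_n (fun k => RtoC (Binomial.C n k) * (-1) ^ k * x ^ k / cfact k) n.

(* v is the integral of g along the segment from 0 to y: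
   int_0^y g(t) dt = int_0^1 g(s y) y ds  (a real Riemann integral of a
   C-valued function, C viewed as a normed R-module). *)
Definition is_seg_integral (g : C -> C) (y : C) (v : C) : Prop :=
  is_RInt (V := C_R_NormedModule) (fun s : R => y * g (RtoC s * y)) 0%R 1%R v.

(* Parametrizing the segment by t = s y, the Taylor remainder has the integral form
   R_n(y) = y e^y int_0^1 e^(-s y) (s y)^n / n! ds, so integrating the series of
   y e^(-s y) I_0(2 sqrt(x s y)) term by term (its terms are dominated uniformly in s by an
   exponential series) gives sum_n R_n(y) x^n / n! = e^y v.  Expanding e^(-s y) as well
   yields a double series with terms bounded by a product of two exponential series;
   integrating s^(k+m) and summing along the diagonals k + m = N produces the coefficients
   (-1)^N L_N(x) y^(N+1) / (N+1)!. *)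

From Stdlib Require Import Reals Lra Lia.
From Coquelicot Require Import Coquelicot.
Open Scope C_scope.

Notation CR := C_R_NormedModule.

(* Coquelicot's generic operations leave equations on [C] typed by structure projections,
   which [ring] and [field] do not recognize. *)
Ltac cring := match goal with |- @eq _ ?a ?b => change (@eq C a b) end; cbv beta; ring.
Ltac cfield := match goal with |- @eq _ ?a ?b => change (@eq C a b) end; cbv beta; field.

(** * Derivatives of complex-valued functions of a real variable *)

Lemma is_derive_eq {K : AbsRing} {V : NormedModule K} (f : K -> V) x l l' :
  is_derive f x l' -> l' = l -> is_derive f x l.
Proof. now intros H ->. Qed.

Lemma is_derive_CR_pair (f : R -> C) x a b :
  is_derive (fun t => fst (f t)) x a -> is_derive (fun t => snd (f t)) x b ->
  is_derive (V:=CR) f x (a, b).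
Proof.
  intros Ha Hb. unfold is_derive in *.
  refine (filterdiff_ext _ _ _ _ (filterdiff_comp'_2 (K:=R_AbsRing) (T:=R_NormedModule)
    (U:=R_NormedModule) (V:=R_NormedModule) (W:=CR) _ _ (fun u v => (u, v)) x _ _
    (fun u v => (u, v)) Ha Hb _)).
  - intros t. now destruct (f t).
  - apply filterdiff_linear, (is_linear_prod (K:=R_AbsRing)
      (T:=prod_NormedModule R_AbsRing R_NormedModule R_NormedModule));
      [apply is_linear_fst | apply is_linear_snd].
Qed.

Lemma is_derive_CR_fst (f : R -> C) x l :
  is_derive (V:=CR) f x l -> is_derive (fun t => fst (f t)) x (fst l).
Proof.
  intros H. exact (filterdiff_comp' (K:=R_AbsRing) (V:=CR) (W:=R_NormedModule) f fst x _ _ H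
    (filterdiff_linear _ (is_linear_fst (U:=R_NormedModule) (V:=R_NormedModule)))).
Qed.

Lemma is_derive_CR_snd (f : R -> C) x l :
  is_derive (V:=CR) f x l -> is_derive (fun t => snd (f t)) x (snd l).
Proof.
  intros H. exact (filterdiff_comp' (K:=R_AbsRing) (V:=CR) (W:=R_NormedModule) f snd x _ _ H
    (filterdiff_linear _ (is_linear_snd (U:=R_NormedModule) (V:=R_NormedModule)))).
Qed.

Lemma is_derive_CR_plus (f g : R -> C) x df dg :
  is_derive (V:=CR) f x df -> is_derive (V:=CR) g x dg ->
  is_derive (V:=CR) (fun t => f t + g t) x (df + dg).
Proof. exact (is_derive_plus (V:=CR) f g x df dg). Qed.

Lemma is_derive_CR_opp (f : R -> C) x df :
  is_derive (V:=CR) f x df -> is_derive (V:=CR) (fun t => - f t) x (- df).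
Proof. exact (is_derive_opp (V:=CR) f x df). Qed.

Lemma is_derive_CR_mult (f g : R -> C) x df dg :
  is_derive (V:=CR) f x df -> is_derive (V:=CR) g x dg ->
  is_derive (V:=CR) (fun t => f t * g t) x (df * g x + f x * dg).
Proof.
  intros Hf Hg.
  pose proof (is_derive_CR_fst _ _ _ Hf) as Hf1. pose proof (is_derive_CR_snd _ _ _ Hf) as Hf2.
  pose proof (is_derive_CR_fst _ _ _ Hg) as Hg1. pose proof (is_derive_CR_snd _ _ _ Hg) as Hg2.
  destruct df as [a b], dg as [c d]; simpl in Hf1, Hf2, Hg1, Hg2.
  rewrite (surjective_pairing (_ + _)). apply is_derive_CR_pair.
  - eapply is_derive_eq.
    + apply (is_derive_minus (K:=R_AbsRing) (V:=R_NormedModule)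
        (fun t => fst (f t) * fst (g t))%R (fun t => snd (f t) * snd (g t))%R);
        apply Derive.is_derive_mult; [apply Hf1 | apply Hg1 | apply Hf2 | apply Hg2].
    + simpl. unfold minus, plus, opp; simpl. ring.
  - eapply is_derive_eq.
    + apply (is_derive_plus (K:=R_AbsRing) (V:=R_NormedModule)
        (fun t => fst (f t) * snd (g t))%R (fun t => snd (f t) * fst (g t))%R);
        apply Derive.is_derive_mult; [apply Hf1 | apply Hg2 | apply Hf2 | apply Hg1].
    + simpl. unfold plus; simpl. ring.
Qed.

Lemma is_derive_CR_const (c : C) x : is_derive (V:=CR) (fun _ => c) x (RtoC 0).
Proof.
  apply is_derive_CR_pair; (eapply is_derive_eq; [apply is_derive_const | reflexivity]).
Qed.

Lemma is_derive_CR_scal_l (c : C) (f : R -> C) x df :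
  is_derive (V:=CR) f x df -> is_derive (V:=CR) (fun t => c * f t) x (c * df).
Proof.
  intros Hf. eapply is_derive_eq.
  - exact (is_derive_CR_mult _ _ _ _ _ (is_derive_CR_const c x) Hf).
  - cring.
Qed.

Lemma is_derive_CR_lin (w : C) x : is_derive (V:=CR) (fun t => RtoC t * w) x w.
Proof.
  assert (Hid : is_derive (V:=CR) RtoC x (RtoC 1)).
  { apply is_derive_CR_pair.
    - apply (is_derive_id (K:=R_AbsRing)).
    - apply (is_derive_ext (fun _ => 0%R)); [reflexivity |].
      eapply is_derive_eq; [apply is_derive_const | reflexivity]. }
  eapply is_derive_eq; [exact (is_derive_CR_mult _ _ _ _ _ Hid (is_derive_CR_const w x)) | cring].
Qed.

Lemma is_derive_CR_pow (w : C) n x :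
  is_derive (V:=CR) (fun t => (RtoC t * w) ^ S n) x (RtoC (INR (S n)) * w * (RtoC x * w) ^ n).
Proof.
  induction n as [|n IH].
  - apply (is_derive_ext (fun t => RtoC t * w)); [intros t; simpl; cring |].
    eapply is_derive_eq; [apply is_derive_CR_lin | simpl; cring].
  - eapply is_derive_eq; [exact (is_derive_CR_mult _ _ _ _ _ (is_derive_CR_lin w x) IH) |].
    rewrite (S_INR (S n)), RtoC_plus. simpl Cpow. cring.
Qed.

Lemma is_derive_CR_cexp (w : C) x :
  is_derive (V:=CR) (fun t => cexp (RtoC t * w)) x (w * cexp (RtoC x * w)).
Proof.
  destruct w as [a b]. rewrite (surjective_pairing (_ * _)).
  apply is_derive_CR_pair.
  - apply (is_derive_ext (fun t => exp (t * a) * cos (t * b))%R).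
    { intros t. unfold cexp; simpl. f_equal; f_equal; ring. }
    eapply is_derive_eq; [auto_derive; auto |].
    unfold cexp; simpl. replace (x * a - 0 * b)%R with (x * a)%R by ring.
    replace (x * b + 0 * a)%R with (x * b)%R by ring. ring.
  - apply (is_derive_ext (fun t => exp (t * a) * sin (t * b))%R).
    { intros t. unfold cexp; simpl. f_equal; f_equal; ring. }
    eapply is_derive_eq; [auto_derive; auto |].
    unfold cexp; simpl. replace (x * a - 0 * b)%R with (x * a)%R by ring.
    replace (x * b + 0 * a)%R with (x * b)%R by ring. ring.
Qed.

(** * The exponential and the integral form of the Taylor remainder *)

Lemma cexp_add a b : cexp (a + b) = cexp a * cexp b.
Proof.
  destruct a as [a1 a2], b as [b1 b2]. unfold cexp; simpl.
  rewrite exp_plus, cos_plus, sin_plus.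
  apply injective_projections; simpl; ring.
Qed.

Lemma cexp_0 : cexp 0 = 1.
Proof.
  unfold cexp; simpl. rewrite exp_0, cos_0, sin_0.
  apply injective_projections; simpl; ring.
Qed.

Lemma cexp_opp_l w : cexp (- w) * cexp w = 1.
Proof. rewrite <- cexp_add. replace (- w + w) with (RtoC 0) by ring. apply cexp_0. Qed.

Lemma Cmod_cexp z : Cmod (cexp z) = exp (Re z).
Proof.
  destruct z as [a b]. unfold cexp, Cmod; cbn [fst snd Re Im].
  replace ((exp a * cos b) ^ 2 + (exp a * sin b) ^ 2)%R with (exp a ^ 2)%R.
  - apply sqrt_pow2. left; apply exp_pos.
  - rewrite <- (Rmult_1_r (exp a ^ 2)), <- (sin2_cos2 b). unfold Rsqr. ring.
Qed.

Lemma exp_le_exp a b : (a <= b)%R -> (exp a <= exp b)%R.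
Proof. intros [H | <-]; [left; now apply exp_increasing | now right]. Qed.

Lemma Cmod_cexp_le z : (Cmod (cexp z) <= exp (Cmod z))%R.
Proof.
  rewrite Cmod_cexp. apply exp_le_exp.
  pose proof (re_le_Cmod z). pose proof (Rle_abs (Re z)). lra.
Qed.

Lemma cfact_neq_0 n : cfact n <> 0.
Proof. intros H. apply RtoC_inj in H. exact (INR_fact_neq_0 n H). Qed.

Lemma cfact_S n : cfact (S n) = RtoC (INR (S n)) * cfact n.
Proof. unfold cfact. rewrite <- RtoC_mult, <- mult_INR. reflexivity. Qed.

Lemma Cmod_cfact n : Cmod (cfact n) = INR (Factorial.fact n).
Proof. unfold cfact. rewrite Cmod_R. apply Rabs_pos_eq, pos_INR. Qed.

Lemma INR_fact_ge_1 n : (1 <= INR (Factorial.fact n))%R.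
Proof. apply (le_INR 1). pose proof (Factorial.lt_O_fact n). lia. Qed.

Lemma Cmod_div_cfact_le z n : (Cmod (z / cfact n) <= Cmod z)%R.
Proof.
  rewrite Cmod_div by apply cfact_neq_0. rewrite Cmod_cfact.
  apply Rle_div_l; [apply INR_fact_lt_0 |].
  pose proof (INR_fact_ge_1 n). pose proof (Cmod_ge_0 z). nra.
Qed.

Definition taylor_term (w : C) (k : nat) (t : R) : C := (RtoC t * w) ^ k / cfact k.
Definition taylor_poly (w : C) (n : nat) (t : R) : C := sum_n (fun k => taylor_term w k t) n.

Lemma is_derive_taylor_term_S (w : C) n x :
  is_derive (V:=CR) (taylor_term w (S n)) x (w * taylor_term w n x).
Proof.
  unfold taylor_term.
  apply (is_derive_ext (fun t => / cfact (S n) * (RtoC t * w) ^ S n));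
    [intros t; unfold Cdiv; cring |].
  eapply is_derive_eq; [apply is_derive_CR_scal_l, is_derive_CR_pow |].
  rewrite cfact_S. cfield. split; [apply cfact_neq_0 |].
  intros H. apply RtoC_inj in H. exact (not_0_INR (S n) (Nat.neq_succ_0 n) H).
Qed.

Lemma ex_derive_taylor_term w n x : ex_derive (V:=CR) (taylor_term w n) x.
Proof.
  destruct n as [|n].
  - exists (RtoC 0). eapply is_derive_ext with (f := fun _ : R => RtoC 1).
    + intros t. unfold taylor_term, cfact. simpl. cfield.
    + apply is_derive_CR_const.
  - eexists. apply is_derive_taylor_term_S.
Qed.

Lemma is_derive_taylor_poly (w : C) n x :
  is_derive (V:=CR) (taylor_poly w n) x (w * (taylor_poly w n x - taylor_term w n x)).
Proof.
  unfold taylor_poly. induction n as [|n IH].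
  - eapply is_derive_ext with (f := fun _ : R => RtoC 1).
    + intros t. rewrite sum_O. unfold taylor_term, cfact. simpl. cfield.
    + eapply is_derive_eq; [apply is_derive_CR_const |]. rewrite sum_O. cring.
  - apply (is_derive_ext (fun t => sum_n (fun k => taylor_term w k t) n + taylor_term w (S n) t));
      [intros t; now rewrite sum_Sn |].
    eapply is_derive_eq; [exact (is_derive_CR_plus _ _ _ _ _ IH (is_derive_taylor_term_S w n x)) |].
    rewrite sum_Sn. unfold plus; simpl. cring.
Qed.

Lemma taylor_poly_0 w n : taylor_poly w n 0 = 1.
Proof.
  unfold taylor_poly. induction n as [|n IH].
  - rewrite sum_O. unfold taylor_term, cfact. simpl. cfield.
  - rewrite sum_Sn, IH. unfold taylor_term.
    replace (RtoC 0 * w) with (RtoC 0) by ring. simpl Cpow.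
    change (@eq C (1 + 0 * 0 ^ n / cfact (S n)) 1). field. apply cfact_neq_0.
Qed.

Definition remainder_integrand (w : C) (n : nat) (s : R) : C :=
  cexp w * (w * (cexp (RtoC s * - w) * taylor_term w n s)).

Lemma is_RInt_Rrem (w : C) (n : nat) :
  is_RInt (V:=CR) (remainder_integrand w n) 0 1 (Rrem n w).
Proof.
  set (F := fun s : R => - (cexp w * (cexp (RtoC s * - w) * taylor_poly w n s))).
  assert (HF : forall s, is_derive (V:=CR) F s (remainder_integrand w n s)).
  { intros s. unfold F, remainder_integrand. eapply is_derive_eq.
    - apply is_derive_CR_opp, is_derive_CR_scal_l, is_derive_CR_mult;
        [apply is_derive_CR_cexp | apply is_derive_taylor_poly].
    - cring. }
  assert (Hc : forall s, continuous (remainder_integrand w n) s).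
  { intros s. apply (ex_derive_continuous (K:=R_AbsRing) (V:=CR)).
    destruct (ex_derive_taylor_term w n s) as [d Hd].
    eexists. apply is_derive_CR_scal_l, is_derive_CR_scal_l, is_derive_CR_mult;
      [apply is_derive_CR_cexp | apply Hd]. }
  replace (Rrem n w) with (minus (F 1) (F 0)).
  { exact (is_RInt_derive (V:=C_R_CompleteNormedModule) F _ 0 1
      (fun s _ => HF s) (fun s _ => Hc s)). }
  unfold F. rewrite taylor_poly_0.
  replace (RtoC 0 * - w) with (RtoC 0) by ring. replace (RtoC 1 * - w) with (- w) by ring.
  assert (Hpoly : taylor_poly w n 1 = sum_n (fun k => w ^ k / cfact k) n).
  { apply sum_n_ext. intros k. unfold taylor_term. now rewrite Cmult_1_l. }
  rewrite cexp_0, Hpoly. unfold Rrem. set (P := sum_n _ n).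
  change (@eq C (- (cexp w * (cexp (- w) * P)) - - (cexp w * (1 * 1))) (cexp w - P)).
  transitivity (cexp w - (cexp (- w) * cexp w) * P); [ring |].
  rewrite cexp_opp_l. ring.
Qed.

Lemma norm_CR (z : C) : @norm R_AbsRing CR z = Cmod z.
Proof.
  destruct z as [a b]. unfold norm; simpl. unfold prod_norm, Cmod; simpl.
  f_equal. change (norm a) with (Rabs a). change (norm b) with (Rabs b).
  rewrite !Rmult_1_r, <- !Rabs_mult, !(Rabs_pos_eq (_ * _)) by nra. reflexivity.
Qed.

Lemma Cmod_taylor_term_le w n s : (0 <= s <= 1)%R ->
  (Cmod (taylor_term w n s) <= Cmod w ^ n / INR (Factorial.fact n))%R.
Proof.
  intros Hs. unfold taylor_term.
  rewrite Cmod_div by apply cfact_neq_0.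
  rewrite Cmod_cfact, Cmod_pow, Cmod_mult, Cmod_R, Rabs_pos_eq by lra.
  apply Rmult_le_compat_r; [left; apply Rinv_0_lt_compat, INR_fact_lt_0 |].
  pose proof (Cmod_ge_0 w). apply pow_incr. split; nra.
Qed.

Lemma Cmod_cexp_scal_le s w : (0 <= s <= 1)%R -> (Cmod (cexp (RtoC s * w)) <= exp (Cmod w))%R.
Proof.
  intros Hs. eapply Rle_trans; [apply Cmod_cexp_le | apply exp_le_exp].
  rewrite Cmod_mult, Cmod_R, Rabs_pos_eq by lra. pose proof (Cmod_ge_0 w). nra.
Qed.

Lemma Cmod_Rrem_le w n :
  (Cmod (Rrem n w) <= exp (Cmod w) * (Cmod w * (exp (Cmod w) * (Cmod w ^ n / INR (Factorial.fact n)))))%R.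
Proof.
  set (M := (exp (Cmod w) * (Cmod w * (exp (Cmod w) * (Cmod w ^ n / INR (Factorial.fact n)))))%R).
  assert (HM : is_RInt (V:=R_NormedModule) (fun _ => M) 0 1 M).
  { pose proof (is_RInt_const (V:=R_NormedModule) 0 1 M) as H.
    unfold scal in H; simpl in H; unfold mult in H; simpl in H.
    now rewrite Rminus_0_r, Rmult_1_l in H. }
  rewrite <- norm_CR.
  apply (norm_RInt_le (V:=CR) (remainder_integrand w n) (fun _ => M) 0 1); [lra | | apply is_RInt_Rrem | exact HM].
  intros s Hs. rewrite norm_CR. unfold remainder_integrand. rewrite !Cmod_mult.
  apply Rmult_le_compat; [apply Cmod_ge_0 | | apply Cmod_cexp_le |].
  { apply Rmult_le_pos; [| apply Rmult_le_pos]; apply Cmod_ge_0. }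
  apply Rmult_le_compat_l; [apply Cmod_ge_0 |].
  apply Rmult_le_compat; [apply Cmod_ge_0 | apply Cmod_ge_0 | |].
  - rewrite <- (Cmod_opp w). apply Cmod_cexp_scal_le. lra.
  - apply Cmod_taylor_term_le. lra.
Qed.

Lemma is_series_exp r : is_series (fun n => r ^ n / INR (Factorial.fact n))%R (exp r).
Proof.
  eapply is_series_ext; [| exact (is_exp_Reals r)].
  intros n. simpl. rewrite pow_n_pow. reflexivity.
Qed.

Lemma filterlim_C_Cmod (u : nat -> C) l :
  filterlim u eventually (locally l) <-> is_lim_seq (fun n => Cmod (u n - l)) 0.
Proof.
  rewrite (filterlim_locally_ball_norm (K:=C_AbsRing) (U:=C_NormedModule)).
  split; intros H.
  - apply is_lim_seq_spec. intros eps. destruct (H eps) as [N HN]. exists N. intros n Hn.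
    rewrite Rminus_0_r, Rabs_pos_eq by apply Cmod_ge_0. exact (HN n Hn).
  - apply is_lim_seq_spec in H. intros eps. destruct (H eps) as [N HN]. exists N. intros n Hn.
    specialize (HN n Hn). rewrite Rminus_0_r, Rabs_pos_eq in HN by apply Cmod_ge_0. exact HN.
Qed.

Lemma is_series_cexp w : is_series (fun k => w ^ k / cfact k) (cexp w).
Proof.
  apply filterlim_C_Cmod.
  set (K := (exp (Cmod w) * (Cmod w * exp (Cmod w)))%R).
  apply is_lim_seq_le_le with (u := fun _ => 0%R)
    (w := fun n => (K * (Cmod w ^ n / INR (Factorial.fact n)))%R).
  - intros n. split; [apply Cmod_ge_0 |].
    replace (sum_n _ n - cexp w) with (- Rrem n w) by (unfold Rrem; ring).
    rewrite Cmod_opp. eapply Rle_trans; [apply Cmod_Rrem_le | right; unfold K; ring].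
  - apply is_lim_seq_const.
  - replace (Finite 0) with (Rbar_mult K 0) by (simpl; f_equal; ring).
    apply is_lim_seq_scal_l, ex_series_lim_0. eexists. apply is_series_exp.
Qed.

(** * Complex series and termwise integration *)

Lemma Cmod_sum_n_le (a : nat -> C) (b : nat -> R) N :
  (forall n, (Cmod (a n) <= b n)%R) -> (Cmod (sum_n a N) <= sum_n b N)%R.
Proof.
  intros H. induction N as [|N IH].
  - rewrite !sum_O. apply H.
  - rewrite !sum_Sn. eapply Rle_trans; [apply Cmod_triangle |].
    apply Rplus_le_compat; auto.
Qed.

Lemma Cmod_series_le (a : nat -> C) (b : nat -> R) L B :
  is_series a L -> is_series b B -> (forall n, (Cmod (a n) <= b n)%R) -> (Cmod L <= B)%R.
Proof.
  intros Ha Hb H.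
  assert (Hn : filterlim (fun n => norm (K:=C_AbsRing) (V:=C_NormedModule) (sum_n a n)) eventually
      (locally (norm (K:=C_AbsRing) (V:=C_NormedModule) L)))
    by (eapply filterlim_comp; [apply Ha | apply filterlim_norm]).
  change (Rbar_le (Cmod L) B).
  apply (is_lim_seq_le (fun n => norm (K:=C_AbsRing) (V:=C_NormedModule) (sum_n a n)) (sum_n b));
    [intros n; apply Cmod_sum_n_le, H | exact Hn | exact Hb].
Qed.

Lemma Cmod_series_tail_le (a : nat -> C) (b : nat -> R) L B N :
  is_series a L -> is_series b B -> (forall n, (Cmod (a n) <= b n)%R) ->
  (Cmod (L - sum_n a N) <= B - sum_n b N)%R.
Proof.
  intros Ha Hb H.
  apply (Cmod_series_le (fun k => a (S N + k)%nat) (fun k => b (S N + k)%nat)); [| | intros; apply H].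
  - apply is_series_incr_n; [lia |]. simpl.
    refine (eq_ind L (is_series a) Ha _ _).
    assert (E : forall u v : C, u = u - v + v) by (intros; ring). apply E.
  - apply is_series_incr_n; [lia |]. simpl.
    refine (eq_ind B (is_series b) Hb _ _).
    assert (E : forall u v : R, u = (u - v + v)%R) by (intros; ring). apply E.
Qed.

Lemma is_series_Cmult_l (c : C) (a : nat -> C) l :
  is_series a l -> is_series (fun n => c * a n) (c * l).
Proof. exact (is_series_scal_l (K:=C_AbsRing) (V:=C_NormedModule) c a l). Qed.

Lemma is_series_proj (p : C -> R) (a : nat -> C) L :
  (forall u v, p (u + v) = (p u + p v)%R) -> (forall u, (Rabs (p u) <= Cmod u)%R) ->
  is_series a L -> is_series (fun n => p (a n)) (p L).
Proof.
  intros Hadd Hle H.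
  assert (Hsub : forall u v, p (u - v) = (p u - p v)%R).
  { intros u v. pose proof (Hadd (u - v) v) as E. replace (u - v + v) with u in E by ring. lra. }
  assert (Hsum : forall N, sum_n (fun n => p (a n)) N = p (sum_n a N)).
  { induction N as [|N IH]; [now rewrite !sum_O |]. rewrite !sum_Sn, IH. symmetry. apply Hadd. }
  apply filterlim_C_Cmod in H. apply is_lim_seq_spec in H.
  apply (proj2 (filterlim_locally_ball_norm (K:=R_AbsRing) (U:=R_NormedModule) _ _)).
  intros eps. destruct (H eps) as [N HN]. exists N. intros n Hn. specialize (HN n Hn).
  rewrite Rminus_0_r, Rabs_pos_eq in HN by apply Cmod_ge_0.
  change (Rabs (sum_n (fun n => p (a n)) n - p L) < eps)%R.
  rewrite Hsum, <- Hsub. eapply Rle_lt_trans; [apply Hle | exact HN].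
Qed.

Lemma CSeries_unique (a : nat -> C) L : is_series a L -> CSeries a = L.
Proof.
  intros H. unfold CSeries.
  rewrite (is_series_unique _ _ (is_series_proj Re a L (fun _ _ => eq_refl) re_le_Cmod H)).
  rewrite (is_series_unique _ _ (is_series_proj Im a L (fun _ _ => eq_refl)
    (fun u => Rle_trans _ _ _ (Rmax_r _ _) (Rmax_Cmod u)) H)).
  now destruct L.
Qed.

Lemma is_series_I0sqrt z : is_series (fun n => z ^ n / (cfact n * cfact n)) (I0sqrt z).
Proof.
  assert (Hex : ex_series (K:=C_AbsRing) (V:=C_CompleteNormedModule)
      (fun n => z ^ n / (cfact n * cfact n))).
  { apply (ex_series_le (V:=C_CompleteNormedModule) _ (fun n => Cmod z ^ n / INR (Factorial.fact n))%R).
    - intros n. change (Cmod (z ^ n / (cfact n * cfact n)) <= Cmod z ^ n / INR (Factorial.fact n))%R.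
      replace (z ^ n / (cfact n * cfact n)) with (z ^ n / cfact n / cfact n)
        by (field; apply cfact_neq_0).
      eapply Rle_trans; [apply Cmod_div_cfact_le |].
      rewrite Cmod_div, Cmod_pow, Cmod_cfact by apply cfact_neq_0. apply Rle_refl.
    - eexists. apply is_series_exp. }
  destruct Hex as [L HL]. unfold I0sqrt. now rewrite (CSeries_unique _ L HL).
Qed.

Lemma is_RInt_sum_n {V : NormedModule R_AbsRing} (f : nat -> R -> V) (c : nat -> V) a b N :
  (forall n, is_RInt (f n) a b (c n)) ->
  is_RInt (fun s => sum_n (fun n => f n s) N) a b (sum_n c N).
Proof.
  intros H. induction N as [|N IH].
  - rewrite sum_O. apply (is_RInt_ext (f 0%nat)); [intros; now rewrite sum_O | apply H].
  - rewrite sum_Sn. apply (is_RInt_ext (fun s => plus (sum_n (fun n => f n s) N) (f (S N) s)));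
      [intros; now rewrite sum_Sn | apply is_RInt_plus; auto].
Qed.

Definition clamp (a b s : R) : R := Rmax a (Rmin b s).

Lemma clamp_in a b s : (a <= b)%R -> (a <= clamp a b s <= b)%R.
Proof. intros. unfold clamp, Rmax, Rmin. repeat destruct Rle_dec; lra. Qed.

Lemma clamp_id a b s : (a <= s <= b)%R -> clamp a b s = s.
Proof. intros. unfold clamp, Rmax, Rmin. repeat destruct Rle_dec; lra. Qed.

(* Weierstrass M-test: the partial sums, extended constantly outside [a, b],
   converge uniformly on R, so [filterlim_RInt] applies. *)
Lemma is_RInt_series_dominated (f : nat -> R -> C) (F : R -> C) (c : nat -> C) (g : nat -> R) G a b :
  (a <= b)%R -> is_series g G ->
  (forall n s, (a <= s <= b)%R -> (Cmod (f n s) <= g n)%R) ->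
  (forall n, is_RInt (V:=CR) (f n) a b (c n)) ->
  (forall s, (a <= s <= b)%R -> is_series (fun n => f n s) (F s)) ->
  exists I, is_series c I /\ is_RInt (V:=CR) F a b I.
Proof.
  intros Hab Hg Hb Hi Hs.
  set (fN := fun N s => sum_n (fun n => f n (clamp a b s)) N).
  set (F' := fun s => F (clamp a b s)).
  assert (Hcl : forall s, (Rmin a b < s < Rmax a b)%R -> clamp a b s = s).
  { intros s. rewrite Rmin_left, Rmax_right by exact Hab. intros. apply clamp_id. lra. }
  assert (HI : forall N, is_RInt (V:=C_R_CompleteNormedModule) (fN N) a b (sum_n c N)).
  { intros N. apply (is_RInt_ext (fun s => sum_n (fun n => f n s) N)).
    - intros s Hs'. unfold fN; cbv beta. now rewrite Hcl.
    - exact (is_RInt_sum_n (V:=CR) f c a b N Hi). }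
  assert (HU : filterlim fN eventually (locally (T:=fct_UniformSpace R C_R_CompleteNormedModule) F')).
  { apply (proj2 (@filterlim_locally nat (fct_UniformSpace R C_R_CompleteNormedModule) eventually _ fN F')).
    intros eps.
    destruct (proj1 (filterlim_locally_ball_norm (K:=R_AbsRing) (U:=R_NormedModule) (sum_n g) G) Hg eps)
      as [N0 HN0].
    exists N0. intros N HN t. apply C_NormedModule_mixin_compat1.
    specialize (HN0 N HN). unfold ball_norm in HN0.
    change (Cmod (fN N t - F' t) < eps)%R.
    rewrite <- Cmod_opp. replace (- (fN N t - F' t)) with (F' t - fN N t) by ring.
    eapply Rle_lt_trans; [exact (Cmod_series_tail_le (fun n => f n (clamp a b t)) g (F' t) G N
      (Hs _ (clamp_in a b t Hab)) Hg (fun n => Hb n _ (clamp_in a b t Hab))) |].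
    eapply Rle_lt_trans; [| exact HN0].
    change (G - sum_n g N <= Rabs (sum_n g N - G))%R.
    rewrite <- Rabs_Ropp. eapply Rle_trans; [| apply Rle_abs]. right; ring. }
  destruct (filterlim_RInt (U:=nat) (V:=C_R_CompleteNormedModule) fN a b eventually eventually_filter
    F' (sum_n c) HI HU) as [I [HcI HFI]].
  exists I. split; [exact HcI |].
  apply (is_RInt_ext F'); [intros s Hs'; unfold F'; cbv beta; now rewrite Hcl | exact HFI].
Qed.

Lemma is_RInt_Cmult_l (c : C) (f : R -> C) a b l :
  is_RInt (V:=CR) f a b l -> is_RInt (V:=CR) (fun s => c * f s) a b (c * l).
Proof.
  intros H.
  pose proof (is_RInt_fct_extend_fst (U:=R_NormedModule) (V:=R_NormedModule) f a b l H) as H1.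
  pose proof (is_RInt_fct_extend_snd (U:=R_NormedModule) (V:=R_NormedModule) f a b l H) as H2.
  destruct c as [c1 c2].
  replace ((c1, c2) * l) with ((c1 * fst l - c2 * snd l)%R, (c1 * snd l + c2 * fst l)%R)
    by (destruct l; reflexivity).
  apply (is_RInt_fct_extend_pair (U:=R_NormedModule) (V:=R_NormedModule)).
  - apply (is_RInt_ext (fun s => minus (scal c1 (fst (f s))) (scal c2 (snd (f s)))));
      [intros s _; now destruct (f s) |].
    apply (is_RInt_minus (V:=R_NormedModule)); now apply (is_RInt_scal (V:=R_NormedModule)).
  - apply (is_RInt_ext (fun s => plus (scal c1 (snd (f s))) (scal c2 (fst (f s)))));
      [intros s _; now destruct (f s) |].
    apply (is_RInt_plus (V:=R_NormedModule)); now apply (is_RInt_scal (V:=R_NormedModule)).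
Qed.

Lemma is_RInt_RtoC (h : R -> R) a b l :
  is_RInt h a b l -> is_RInt (V:=CR) (fun s => RtoC (h s)) a b (RtoC l).
Proof.
  intros H. apply (is_RInt_fct_extend_pair (U:=R_NormedModule) (V:=R_NormedModule)); [exact H |].
  pose proof (is_RInt_const (V:=R_NormedModule) a b 0%R) as H0.
  unfold scal in H0; simpl in H0; unfold mult in H0; simpl in H0. now rewrite Rmult_0_r in H0.
Qed.

Lemma is_RInt_pow_01 j : is_RInt (fun s => s ^ j)%R 0 1 (/ INR (S j))%R.
Proof.
  replace (/ INR (S j))%R with (1 ^ S j / INR (S j) - 0 ^ S j / INR (S j))%R by
    (rewrite pow1, pow_i by lia; field; apply not_0_INR; lia).
  apply is_RInt_pow.
Qed.

(** * Summing a dominated double series along diagonals *)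

Lemma sum_n_minus {G : AbelianGroup} (u v : nat -> G) n :
  sum_n (fun k => minus (u k) (v k)) n = minus (sum_n u n) (sum_n v n).
Proof.
  induction n as [|n IH]; [now rewrite !sum_O |].
  rewrite !sum_Sn, IH. unfold minus. rewrite opp_plus, !plus_assoc. f_equal.
  rewrite <- !plus_assoc. f_equal. apply plus_comm.
Qed.

Lemma sum_n_diag {G : AbelianMonoid} (d : nat -> nat -> G) M :
  sum_n (fun N => sum_n (fun k => d k (N - k)%nat) N) M = sum_n (fun k => sum_n (d k) (M - k)%nat) M.
Proof.
  induction M as [|M IH]; [now rewrite !sum_O |].
  rewrite sum_Sn, IH, (sum_Sn (fun k => sum_n (d k) (S M - k)%nat)).
  rewrite (sum_n_ext_loc (fun k => sum_n (d k) (S M - k)%nat)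
    (fun k => plus (sum_n (d k) (M - k)%nat) (d k (S M - k)%nat))).
  - rewrite sum_n_plus, sum_Sn, Nat.sub_diag, sum_O. apply plus_assoc.
  - intros k Hk. replace (S M - k)%nat with (S (M - k)) by lia. apply sum_Sn.
Qed.

(* The defect of the square partial sum [M] is bounded by the row tails, whose total
   [B A_M - sum of the Cauchy product up to M] tends to [B A - A B = 0]. *)
Lemma is_series_diag (d : nat -> nat -> C) (r : nat -> C) v (a b : nat -> R) A B :
  (forall k, (0 <= a k)%R) -> (forall m, (0 <= b m)%R) -> is_series a A -> is_series b B ->
  (forall k m, (Cmod (d k m) <= a k * b m)%R) ->
  (forall k, is_series (d k) (r k)) -> is_series r v ->
  is_series (fun N => sum_n (fun k => d k (N - k)%nat) N) v.
Proof.
  intros Ha0 Hb0 HA HB Hd Hr Hv. apply filterlim_C_Cmod.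
  apply (is_lim_seq_ext (fun M => Cmod (sum_n (G:=C_AbelianMonoid)
    (fun N => sum_n (G:=C_AbelianMonoid) (fun k => d k (N - k)%nat) N) M - v))); [reflexivity |].
  set (cauchy := fun N => sum_n (fun k => a k * b (N - k)%nat)%R N).
  set (E := fun M => (B * sum_n a M - sum_n cauchy M)%R).
  apply is_lim_seq_le_le with (u := fun _ => 0%R)
    (w := fun M => (Cmod (sum_n r M - v) + E M)%R).
  - intros M. split; [apply Cmod_ge_0 |].
    rewrite (sum_n_diag d M).
    replace (sum_n (fun k => sum_n (d k) (M - k)%nat) M - v)
      with ((sum_n r M - v) - sum_n (fun k => r k - sum_n (d k) (M - k)%nat) M)
      by (rewrite (sum_n_minus (G:=C_AbelianGroup) r);
          apply (fun p q w : C => ltac:(ring) : p - w - (p - q) = q - w)).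
    eapply Rle_trans; [apply Cmod_triangle |]. rewrite Cmod_opp.
    apply Rplus_le_compat_l. unfold E, cauchy.
    rewrite (sum_n_diag (G:=R_AbelianMonoid) (fun k m => a k * b m)%R M).
    eapply Rle_trans.
    { apply Cmod_sum_n_le. intros k.
      exact (Cmod_series_tail_le (d k) (fun m => a k * b m)%R (r k) (a k * B)%R (M - k)%nat (Hr k)
        (is_series_scal_l (K:=R_AbsRing) (V:=R_NormedModule) (a k) b B HB) (Hd k)). }
    right. rewrite (sum_n_minus (G:=R_AbelianGroup)). apply (f_equal2 Rminus); [| reflexivity].
    transitivity (sum_n (fun k => mult B (a k)) M);
      [apply sum_n_ext; intros; apply Rmult_comm | apply (sum_n_mult_l (K:=R_Ring))].
  - apply is_lim_seq_const.
  - replace (Finite 0) with (Rbar_plus 0 (B * A - A * B)%R) by (simpl; f_equal; ring).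
    apply is_lim_seq_plus'; [now apply filterlim_C_Cmod |].
    apply is_lim_seq_minus'.
    + apply (is_lim_seq_scal_l _ B A), HA.
    + apply (is_lim_seq_ext (sum_n (fun N => sum_f_R0 (fun k => a k * b (N - k)%nat)%R N))).
      * intros n. apply sum_n_ext. intros N. unfold cauchy. now rewrite sum_n_Reals.
      * exact (is_series_mult_pos a b A B HA HB Ha0 Hb0).
Qed.

Definition I0_seg_term (x y : C) (n : nat) (s : R) : C :=
  y * (cexp (- (RtoC s * y)) * ((x * (RtoC s * y)) ^ n / (cfact n * cfact n))).

Definition I0_seg_coef (x y : C) (n : nat) : C := x ^ n / cfact n * cexp (- y) * Rrem n y.

Lemma is_RInt_I0_seg_term x y n : is_RInt (V:=CR) (I0_seg_term x y n) 0 1 (I0_seg_coef x y n).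
Proof.
  apply (is_RInt_ext (fun s => x ^ n / cfact n * cexp (- y) * remainder_integrand y n s));
    [| apply is_RInt_Cmult_l, is_RInt_Rrem].
  intros s _. change (@eq C (x ^ n / cfact n * cexp (- y) * remainder_integrand y n s)
    (I0_seg_term x y n s)).
  unfold I0_seg_term, remainder_integrand, taylor_term.
  replace (RtoC s * - y) with (- (RtoC s * y)) by ring.
  rewrite (Cpow_mult_l x).
  transitivity ((cexp (- y) * cexp y) * (y * (cexp (- (RtoC s * y)) *
    (x ^ n * (RtoC s * y) ^ n / (cfact n * cfact n))))).
  - field. apply cfact_neq_0.
  - rewrite cexp_opp_l. ring.
Qed.

Lemma Cmod_I0_seg_term_le x y n s : (0 <= s <= 1)%R ->
  (Cmod (I0_seg_term x y n s) <= Cmod y * exp (Cmod y) * (Cmod (x * y) ^ n / INR (Factorial.fact n)))%R.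
Proof.
  intros Hs. unfold I0_seg_term.
  replace ((x * (RtoC s * y)) ^ n / (cfact n * cfact n)) with (taylor_term (x * y) n s / cfact n)
    by (unfold taylor_term; replace (x * (RtoC s * y)) with (RtoC s * (x * y)) by ring;
        field; apply cfact_neq_0).
  rewrite (Cmod_mult y), (Cmod_mult (cexp _)), Rmult_assoc. apply Rmult_le_compat_l; [apply Cmod_ge_0 |].
  apply Rmult_le_compat; [apply Cmod_ge_0 | apply Cmod_ge_0 | |].
  - rewrite <- (Cmod_opp y). replace (- (RtoC s * y)) with (RtoC s * - y) by ring.
    now apply Cmod_cexp_scal_le.
  - eapply Rle_trans; [apply Cmod_div_cfact_le | now apply Cmod_taylor_term_le].
Qed.

Lemma is_series_I0_seg_term x y s :
  is_series (fun n => I0_seg_term x y n s) (y * (cexp (- (RtoC s * y)) * I0sqrt (x * (RtoC s * y)))).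
Proof.
  rewrite Cmult_assoc. eapply is_series_ext; [| exact (is_series_Cmult_l _ _ _ (is_series_I0sqrt _))].
  intros n. unfold I0_seg_term. cring.
Qed.

(** * Expansion into Laguerre polynomials *)

Definition I0_seg_dterm (x y : C) (k m : nat) (s : R) : C :=
  y * ((- (RtoC s * y)) ^ m / cfact m * ((x * (RtoC s * y)) ^ k / (cfact k * cfact k))).

Definition laguerre_dcoef (x y : C) (k m : nat) : C :=
  I0_seg_dterm x y k m 1 * RtoC (/ INR (S (m + k))).

Lemma I0_seg_dterm_eq x y k m s :
  I0_seg_dterm x y k m s = RtoC (s ^ (m + k)) * I0_seg_dterm x y k m 1.
Proof.
  unfold I0_seg_dterm. rewrite RtoC_pow, Cpow_add_r.
  replace (- (RtoC s * y)) with (RtoC s * - y) by ring.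
  replace (- (RtoC 1 * y)) with (- y) by ring.
  replace (x * (RtoC s * y)) with (RtoC s * (x * y)) by ring.
  replace (x * (RtoC 1 * y)) with (x * y) by ring.
  rewrite !Cpow_mult_l. field. split; apply cfact_neq_0.
Qed.

Lemma is_RInt_I0_seg_dterm x y k m : is_RInt (V:=CR) (I0_seg_dterm x y k m) 0 1 (laguerre_dcoef x y k m).
Proof.
  apply (is_RInt_ext (fun s => I0_seg_dterm x y k m 1 * RtoC (s ^ (m + k))));
    [intros s _; rewrite (I0_seg_dterm_eq x y k m s); apply Cmult_comm |].
  apply is_RInt_Cmult_l, is_RInt_RtoC, is_RInt_pow_01.
Qed.

Lemma Cmod_I0_seg_dterm_le x y k m s : (0 <= s <= 1)%R ->
  (Cmod (I0_seg_dterm x y k m s) <= Cmod (x * y) ^ k / INR (Factorial.fact k) *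
     (Cmod y * (Cmod y ^ m / INR (Factorial.fact m))))%R.
Proof.
  intros Hs. unfold I0_seg_dterm.
  replace ((x * (RtoC s * y)) ^ k / (cfact k * cfact k)) with (taylor_term (x * y) k s / cfact k)
    by (unfold taylor_term; replace (x * (RtoC s * y)) with (RtoC s * (x * y)) by ring;
        field; apply cfact_neq_0).
  replace (- (RtoC s * y)) with (RtoC s * - y) by ring. fold (taylor_term (- y) m s).
  rewrite (Cmod_mult y), (Cmod_mult (taylor_term _ _ _)).
  pose proof (Cmod_taylor_term_le (- y) m s Hs) as Hm. rewrite Cmod_opp in Hm.
  pose proof (Rle_trans _ _ _ (Cmod_div_cfact_le _ k) (Cmod_taylor_term_le (x * y) k s Hs)) as Hk.
  pose proof (Cmod_ge_0 y). pose proof (Cmod_ge_0 (taylor_term (- y) m s)).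
  pose proof (Cmod_ge_0 (taylor_term (x * y) k s / cfact k)).
  apply Rle_trans with (Cmod y * ((Cmod y ^ m / INR (Factorial.fact m)) *
    (Cmod (x * y) ^ k / INR (Factorial.fact k))))%R; [| right; ring].
  apply Rmult_le_compat_l; [assumption |]. now apply Rmult_le_compat.
Qed.

Lemma Cmod_laguerre_dcoef_le x y k m :
  (Cmod (laguerre_dcoef x y k m) <= Cmod (x * y) ^ k / INR (Factorial.fact k) *
     (Cmod y * (Cmod y ^ m / INR (Factorial.fact m))))%R.
Proof.
  unfold laguerre_dcoef. rewrite Cmod_mult, Cmod_R.
  assert (Hinv : (0 <= Rabs (/ INR (S (m + k))) <= 1)%R).
  { rewrite Rabs_pos_eq by (left; apply Rinv_0_lt_compat, lt_0_INR; lia).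
    split; [left; apply Rinv_0_lt_compat, lt_0_INR; lia |].
    rewrite <- Rinv_1. apply Rinv_le_contravar; [lra | apply (le_INR 1); lia]. }
  pose proof (Cmod_ge_0 (I0_seg_dterm x y k m 1)).
  eapply Rle_trans; [apply Rmult_le_compat_l; [assumption | apply Hinv] |].
  rewrite Rmult_1_r. apply Cmod_I0_seg_dterm_le. lra.
Qed.

Lemma is_series_I0_seg_dterm x y k s :
  is_series (fun m => I0_seg_dterm x y k m s) (I0_seg_term x y k s).
Proof.
  set (T := (x * (RtoC s * y)) ^ k / (cfact k * cfact k)).
  replace (I0_seg_term x y k s) with (y * T * cexp (- (RtoC s * y)))
    by (unfold I0_seg_term; fold T; cring).
  eapply is_series_ext; [| exact (is_series_Cmult_l _ _ _ (is_series_cexp _))].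
  intros m. unfold I0_seg_dterm. fold T. cring.
Qed.

Lemma is_series_laguerre_dcoef x y k : is_series (laguerre_dcoef x y k) (I0_seg_coef x y k).
Proof.
  destruct (is_RInt_series_dominated (I0_seg_dterm x y k) (I0_seg_term x y k) (laguerre_dcoef x y k)
     (fun m => Cmod (x * y) ^ k / INR (Factorial.fact k) * (Cmod y * (Cmod y ^ m / INR (Factorial.fact m))))%R
     _ 0 1 Rle_0_1 (is_series_scal_l (K:=R_AbsRing) (V:=R_NormedModule) _ _ _
       (is_series_scal_l (K:=R_AbsRing) (V:=R_NormedModule) _ _ _ (is_series_exp _)))
     (fun m s Hs => Cmod_I0_seg_dterm_le x y k m s Hs) (is_RInt_I0_seg_dterm x y k)
     (fun s _ => is_series_I0_seg_dterm x y k s)) as [I [HI Hint]].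
  replace (I0_seg_coef x y k) with I; [exact HI |].
  rewrite <- (is_RInt_unique (V:=C_R_CompleteNormedModule) _ _ _ _ Hint).
  exact (is_RInt_unique (V:=C_R_CompleteNormedModule) _ _ _ _ (is_RInt_I0_seg_term x y k)).
Qed.

Lemma RtoC_m1 : RtoC (-1) = - (1).
Proof. apply injective_projections; simpl; lra. Qed.

Lemma laguerre_dcoef_diag x y N k : (k <= N)%nat ->
  laguerre_dcoef x y k (N - k) =
  (-1) ^ N * y ^ S N / cfact (S N) * (RtoC (Binomial.C N k) * (-1) ^ k * x ^ k / cfact k).
Proof.
  intros Hk. rewrite !RtoC_m1. set (j := (N - k)%nat). replace N with (j + k)%nat by (unfold j; lia).
  unfold laguerre_dcoef, I0_seg_dterm, Binomial.C. replace (j + k - k)%nat with j by lia.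
  replace (RtoC 1 * y) with y by ring.
  assert (Hf : forall n, INR (Factorial.fact n) <> 0%R) by (intros; apply INR_fact_neq_0).
  assert (HS : INR (S (j + k)) <> 0%R) by (apply not_0_INR; lia).
  rewrite RtoC_div by (apply Rmult_integral_contrapositive; split; auto).
  rewrite RtoC_mult, RtoC_inv by auto.
  fold (cfact (j + k)). fold (cfact k). fold (cfact j).
  rewrite cfact_S, Cpow_S, !Cpow_add_r.
  replace (- y) with (- (1) * y) by ring. rewrite !Cpow_mult_l.
  assert (HS' : RtoC (INR (S (j + k))) <> 0) by (intros E; apply RtoC_inj in E; auto).
  pose proof (cfact_neq_0 j). pose proof (cfact_neq_0 k). pose proof (cfact_neq_0 (j + k)).
  assert (Hsq : (- (1)) ^ k * (- (1)) ^ k = 1).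
  { rewrite <- Cpow_mult_l. replace (- (1) * - (1)) with (RtoC 1) by ring. apply Cpow_1_l. }
  transitivity (((- (1)) ^ k * (- (1)) ^ k) * (y * ((- (1)) ^ j * y ^ j / cfact j *
    (x ^ k * y ^ k / (cfact k * cfact k))) * / RtoC (INR (S (j + k))))).
  - rewrite Hsq. ring.
  - field. auto.
Qed.

Lemma laguerre_diag_sum x y N :
  sum_n (fun k => laguerre_dcoef x y k (N - k)) N =
  (-1) ^ N * Laguerre N x * y ^ S N / cfact (S N).
Proof.
  set (c := (-1) ^ N * y ^ S N / cfact (S N)).
  transitivity (sum_n (fun k => mult c (RtoC (Binomial.C N k) * (-1) ^ k * x ^ k / cfact k)) N).
  { apply sum_n_ext_loc. intros k Hk. now apply laguerre_dcoef_diag. }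
  transitivity (mult c (Laguerre N x)); [apply (sum_n_mult_l (K:=C_Ring)) |].
  unfold c. change (@eq C ((-1) ^ N * y ^ S N / cfact (S N) * Laguerre N x)
    ((-1) ^ N * Laguerre N x * y ^ S N / cfact (S N))).
  field. apply cfact_neq_0.
Qed.

Lemma pow_div_fact_ge_0 r n : (0 <= r)%R -> (0 <= r ^ n / INR (Factorial.fact n))%R.
Proof.
  intros Hr. apply Rmult_le_pos; [now apply pow_le | left; apply Rinv_0_lt_compat, INR_fact_lt_0].
Qed.

Lemma is_series_laguerre x y v : is_series (I0_seg_coef x y) v ->
  is_series (fun n => (-1) ^ n * Laguerre n x * y ^ S n / cfact (S n)) v.
Proof.
  intros Hcoef. eapply is_series_ext; [intros N; apply laguerre_diag_sum |].
  apply (is_series_diag (laguerre_dcoef x y) (I0_seg_coef x y) v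
    (fun k => Cmod (x * y) ^ k / INR (Factorial.fact k))%R
    (fun m => Cmod y * (Cmod y ^ m / INR (Factorial.fact m)))%R (exp (Cmod (x * y)))
    (Cmod y * exp (Cmod y))%R);
    [| | apply is_series_exp | apply (is_series_scal_l (K:=R_AbsRing) (V:=R_NormedModule)), is_series_exp
     | apply Cmod_laguerre_dcoef_le | apply is_series_laguerre_dcoef | exact Hcoef].
  - intros k. apply pow_div_fact_ge_0, Cmod_ge_0.
  - intros m. apply Rmult_le_pos; apply Cmod_ge_0 || apply pow_div_fact_ge_0, Cmod_ge_0.
Qed.

Lemma cexp_mult_I0_seg_coef x y n : cexp y * I0_seg_coef x y n = Rrem n y * x ^ n / cfact n.
Proof.
  unfold I0_seg_coef.
  transitivity ((cexp (- y) * cexp y) * (Rrem n y * x ^ n / cfact n)).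
  - field. apply cfact_neq_0.
  - rewrite cexp_opp_l. ring.
Qed.

Theorem mainTheorem16 (x y : C) :
  exists v : C,
    is_seg_integral (fun t => cexp (- t) * I0sqrt (x * t)) y v /\
    is_series (fun n => Rrem n y * x ^ n / cfact n) (cexp y * v) /\
    is_series (fun n => (-1) ^ n * Laguerre n x * y ^ (S n) / cfact (S n)) v.
Proof.
  destruct (is_RInt_series_dominated (I0_seg_term x y)
     (fun s => y * (cexp (- (RtoC s * y)) * I0sqrt (x * (RtoC s * y)))) (I0_seg_coef x y)
     (fun n => Cmod y * exp (Cmod y) * (Cmod (x * y) ^ n / INR (Factorial.fact n)))%R _ 0 1 Rle_0_1
     (is_series_scal_l (K:=R_AbsRing) (V:=R_NormedModule) _ _ _ (is_series_exp _))
     (Cmod_I0_seg_term_le x y) (is_RInt_I0_seg_term x y) (fun s _ => is_series_I0_seg_term x y s))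
    as [v [Hcoef Hint]].
  exists v. split; [exact Hint | split].
  - eapply is_series_ext; [apply cexp_mult_I0_seg_coef | exact (is_series_Cmult_l (cexp y) _ _ Hcoef)].
  - exact (is_series_laguerre x y v Hcoef).
Qed.
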